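(* The set $R_{0,2}$ of all Riordan matrices whose $A$-sequence has the form $(1,a_1,0,a_3,a_4,\ldots)$ (i.e. $a_0=1$ and $a_2=0$) is a subgroup of the Riordan group.
   Context: Let $K$ be $\mathbb{R}$ or $\mathbb{C}$. A (proper) Riordan matrix is a pair $(g,f)$ of formal power series in $K[[t]]$ with $g(0)=1$, $f(0)=0$, $f'(0)\neq 0$, identified with the lower triangular matrix with entries $[t^n]g(t)f(t)^k$. The Riordan group is the set of these matrices under matrix multiplication, $(g_1,f_1)(g_2,f_2)=(g_1\,g_2(f_1),\,f_2(f_1))$, with identity $(1,t)$. The $A$-sequence $(a_j)_{j\ge0}$ of $(g,f)$ is the unique sequence whose generating function $A(t)$ satisfies $f(t)=tA(f(t))$. *)

From mathcomp Require Import all_boot all_order all_algebra.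
Set Implicit Arguments. Unset Strict Implicit. Unset Printing Implicit Defensive.
Import Order.TTheory GRing.Theory Num.Theory.
Local Open Scope ring_scope.

(* Formal power series over K, represented by their coefficient sequence:
   a n = [t^n] a(t). *)
Definition fps (K : numFieldType) := nat -> K.

Section FPS.
Variable K : numFieldType.

Definition fmul (a b : fps K) : fps K :=
  fun n => \sum_(i < n.+1) a i * b (n - i)%N.

Definition fone : fps K := fun n => if n == 0%N then 1 else 0.

Definition fX : fps K := fun n => if n == 1%N then 1 else 0.

Fixpoint fpow (a : fps K) (k : nat) : fps K :=
  match k with 0%N => fone | k'.+1 => fmul a (fpow a k') end.

(* composition a(b(t)); meaningful (and used only) when b 0 = 0, in which
   case [t^n] b^k = 0 for k > n so the sum is the full composition. *)
Definition fcomp (a b : fps K) : fps K :=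
  fun n => \sum_(k < n.+1) a k * fpow b k n.

(* A (proper) Riordan matrix: a pair (g, f) *)
Definition riordan := (fps K * fps K)%type.

Definition is_riordan (M : riordan) : Prop :=
  M.1 0%N = 1 /\ M.2 0%N = 0 /\ M.2 1%N != 0.

Definition rmul (M N : riordan) : riordan :=
  (fmul M.1 (fcomp N.1 M.2), fcomp N.2 M.2).

Definition rid : riordan := (fone, fX).

Definition is_Aseq (A f : fps K) : Prop := f = fmul fX (fcomp A f).

Definition R02 (M : riordan) : Prop :=
  is_riordan M /\ exists A : fps K, is_Aseq A M.2 /\ A 0%N = 1 /\ A 2%N = 0.

End FPS.

From mathcomp Require Import all_boot all_order all_algebra.
From mathcomp Require Import ring zify.
From Stdlib Require Import FunctionalExtensionality.
Set Implicit Arguments. Unset Strict Implicit. Unset Printing Implicit Defensive.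
Import Order.TTheory GRing.Theory Num.Theory.
Local Open Scope ring_scope.

(* Read coefficientwise, f = t A(f) says f_0 = 0, f_1 = a_0, f_2 = a_1 a_0 and
   f_3 = a_1^2 a_0 + a_2 a_0^2, and every f with f_0 = 0, f_1 <> 0 has an
   A-sequence.  Hence a Riordan matrix (g, f) lies in R_{0,2} iff f_1 = 1 and
   f_3 = f_2^2.  Since [t^3] g(f) = g_1 f_3 + 2 g_2 f_1 f_2 + g_3 f_1^3, this
   condition on f is stable under composition and compositional inversion.
   The identities of formal power series behind the group law (associativity
   of composition, ...) are transferred from {poly K}: the first n+1
   coefficients of products and compositions only depend on the first n+1
   coefficients of their arguments. *)

Section FormalPowerSeries.
Variable K : numFieldType.
Implicit Types (a b c f g h u A : fps K) (p q : {poly K}).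

Definition agree n p a := forall i, (i <= n)%N -> p`_i = a i.

Lemma agree_trunc n a : agree n (\poly_(i < n.+1) a i) a.
Proof. by move=> i le_in; rewrite coef_poly ltnS le_in. Qed.

Lemma agree1 n : agree n 1 (fone K).
Proof. by move=> i _; rewrite coef1 /fone; case: i. Qed.

Lemma agreeX n : agree n 'X (fX K).
Proof. by move=> i _; rewrite coefX /fX; case: (i == 1)%N. Qed.

Lemma agreeM n p q a b : agree n p a -> agree n q b -> agree n (p * q) (fmul a b).
Proof.
move=> pa qb i le_in; rewrite coefM; apply: eq_bigr => j _.
have lt_ji := ltn_ord j.
rewrite pa ?qb //; lia.
Qed.

Lemma agree_exp n p a k : agree n p a -> agree n (p ^+ k) (fpow a k).
Proof.
move=> pa; elim: k => [|k IHk]; first exact: agree1.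
by rewrite exprS; apply: agreeM.
Qed.

Lemma fpow_eq0 a k m : a 0%N = 0 -> (m < k)%N -> fpow a k m = 0.
Proof.
move=> a0; elim: k m => [//|k IHk] m lt_mk /=.
rewrite /fmul big1 // => i _.
have [->|i_gt0] := posnP i; first by rewrite a0 mul0r.
have lt_im := ltn_ord i.
rewrite IHk ?mulr0 //; lia.
Qed.

Lemma sum_ord_vanishing_tail (F : nat -> K) n m :
  (forall j, (n <= j)%N -> F j = 0) -> (n <= m)%N ->
  \sum_(j < m) F j = \sum_(j < n) F j.
Proof.
move=> F0 le_nm; rewrite (big_ord_widen _ _ le_nm) [RHS]big_mkcond /=.
by apply: eq_bigr => j _; case: ifP => // /negbT; rewrite -leqNgt => /F0 ->.
Qed.

(* Both sums are cut to their first [i.+1] terms: [(q ^+ j)`_i = fpow b j i]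
   vanishes for [j > i] since [b 0 = 0]. *)
Lemma agree_comp n p q a b :
  b 0%N = 0 -> agree n p a -> agree n q b -> agree n (p \Po q) (fcomp a b).
Proof.
move=> b0 pa qb i le_in; rewrite coef_comp_poly /fcomp.
pose F j := p`_j * (q ^+ j)`_i.
have -> : \sum_(j < size p) F j = \sum_(j < size p + i.+1) F j.
  apply/esym/sum_ord_vanishing_tail; last exact: leq_addr.
  by move=> j le_pj; rewrite /F nth_default // mul0r.
rewrite (@sum_ord_vanishing_tail F i.+1) ?leq_addl //; last first.
  by move=> j lt_ij; rewrite /F (agree_exp j qb le_in) fpow_eq0 ?mulr0.
apply: eq_bigr => j _; have lt_ji := ltn_ord j.
by rewrite /F pa ?(agree_exp j qb le_in) //; lia.
Qed.

Lemma fmulC a b : fmul a b = fmul b a.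
Proof.
apply: functional_extensionality => n.
have [an bn] := (@agree_trunc n a, @agree_trunc n b).
by rewrite -(agreeM an bn (leqnn n)) mulrC (agreeM bn an).
Qed.

Lemma fmulr1 a : fmul a (fone K) = a.
Proof.
apply: functional_extensionality => n.
by rewrite -(agreeM (@agree_trunc n a) (@agree1 n) (leqnn n)) mulr1 agree_trunc.
Qed.

Lemma fcompXr a : fcomp a (fX K) = a.
Proof.
apply: functional_extensionality => n.
by rewrite -(agree_comp _ (@agree_trunc n a) (@agreeX n) (leqnn n)) // comp_polyXr agree_trunc.
Qed.

Lemma fcompXl a : a 0%N = 0 -> fcomp (fX K) a = a.
Proof.
move=> a0; apply: functional_extensionality => n.
by rewrite -(agree_comp a0 (@agreeX n) (@agree_trunc n a) (leqnn n)) comp_polyX agree_trunc.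
Qed.

Lemma fcomp1 a : a 0%N = 0 -> fcomp (fone K) a = fone K.
Proof.
move=> a0; apply: functional_extensionality => n.
rewrite -(agree_comp a0 (@agree1 n) (@agree_trunc n a) (leqnn n)).
by rewrite -polyC1 comp_polyC polyC1 (@agree1 n).
Qed.

Lemma fcompMl a b c : c 0%N = 0 -> fcomp (fmul a b) c = fmul (fcomp a c) (fcomp b c).
Proof.
move=> c0; apply: functional_extensionality => n.
have [[an bn] cn] := (@agree_trunc n a, @agree_trunc n b, @agree_trunc n c).
rewrite -(agree_comp c0 (agreeM an bn) cn (leqnn n)) comp_polyM.
by rewrite (agreeM (agree_comp c0 an cn) (agree_comp c0 bn cn)).
Qed.

Lemma fcomp_coef0 a b : fcomp a b 0%N = a 0%N.
Proof. by rewrite /fcomp big_ord1 /= /fone /= mulr1. Qed.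

Lemma fcompA a b c : b 0%N = 0 -> c 0%N = 0 ->
  fcomp (fcomp a b) c = fcomp a (fcomp b c).
Proof.
move=> b0 c0; apply: functional_extensionality => n.
have [[an bn] cn] := (@agree_trunc n a, @agree_trunc n b, @agree_trunc n c).
have bc0 : fcomp b c 0%N = 0 by rewrite fcomp_coef0.
rewrite -(agree_comp c0 (agree_comp b0 an bn) cn (leqnn n)) -comp_polyA.
by rewrite (agree_comp bc0 an (agree_comp c0 bn cn)).
Qed.

Lemma fmul_coef0 a b : fmul a b 0%N = a 0%N * b 0%N.
Proof. by rewrite /fmul big_ord1. Qed.

Lemma fmulX_coef0 a : fmul (fX K) a 0%N = 0.
Proof. by rewrite fmul_coef0 mul0r. Qed.

Lemma fmulX_coefS a n : fmul (fX K) a n.+1 = a n.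
Proof.
by rewrite -(agreeM (@agreeX n.+1) (@agree_trunc n.+1 a) (leqnn _)) coefXM /= agree_trunc.
Qed.

Lemma fcomp_coef123 a b : b 0%N = 0 ->
  [/\ fcomp a b 1%N = a 1%N * b 1%N,
      fcomp a b 2%N = a 1%N * b 2%N + a 2%N * b 1%N ^+ 2 &
      fcomp a b 3%N = a 1%N * b 3%N + 2%:R * a 2%N * b 1%N * b 2%N + a 3%N * b 1%N ^+ 3].
Proof.
move=> b0; rewrite /fcomp !big_ord_recr big_ord0 /= /fmul.
rewrite !big_ord_recr !big_ord0 /= /fone /= b0.
by split; ring.
Qed.

Definition causal (F : fps K -> fps K) :=
  forall a b n, (forall i, (i < n)%N -> a i = b i) -> F a n = F b n.

(* The fixed point is the limit of the iterates of [F] from 0: the [k]-th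
   iterate already has its first [k] coefficients right. *)
Lemma causal_fixpoint F : causal F -> exists a, F a = a.
Proof.
move=> F_causal; pose x k := iter k F (fun _ => 0).
have x_step k i : (i < k)%N -> x k.+1 i = x k i.
  elim: k i => [//|k IHk] i lt_ik; rewrite /x !iterS; apply: F_causal => j lt_ji.
  apply: IHk; lia.
have x_stable i m : (i < m)%N -> x m i = x i.+1 i.
  elim: m => [//|m IHm] lt_im.
  have [-> //|ne_im] := eqVneq i m.
  rewrite x_step; last lia.
  apply: IHm; lia.
exists (fun i => x i.+1 i); apply: functional_extensionality => n.
rewrite (F_causal _ (x n)); last by move=> i /x_stable.
by rewrite /x iterS.
Qed.

Lemma fmul_inv u : u 0%N != 0 -> exists h, fmul h u = fone K.
Proof.
move=> u0_neq0.
pose F h n := (fone K n - \sum_(i < n) h i * u (n - i)%N) / u 0%N.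
have [h hF] : exists h, F h = h.
  apply: causal_fixpoint => a b n eq_ab; rewrite /F.
  by congr ((_ - _) / _); apply: eq_bigr => i _; rewrite eq_ab.
exists h; apply: functional_extensionality => n.
rewrite /fmul big_ord_recr /= subnn -{2}hF /F divfK //.
by rewrite addrC subrK.
Qed.

Lemma eq_fpow_coef a b k m : (forall i, (i <= m)%N -> a i = b i) ->
  fpow a k m = fpow b k m.
Proof.
move=> eq_ab; have am := @agree_trunc m a.
have bm : agree m (\poly_(i < m.+1) a i) b by move=> i le_im; rewrite am ?eq_ab.
by rewrite -(agree_exp k am (leqnn m)) (agree_exp k bm).
Qed.

Lemma fpow_causal a b k n : a 0%N = 0 -> b 0%N = 0 ->
  (forall i, (i < n)%N -> a i = b i) -> fpow a k.+2 n = fpow b k.+2 n.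
Proof.
move=> a0 b0 eq_ab; change (fmul a (fpow a k.+1) n = fmul b (fpow b k.+1) n).
apply: eq_bigr => i _.
have le_in : (i <= n)%N by rewrite -ltnS.
have [->|i_gt0] := posnP i; first by rewrite a0 b0 !mul0r.
have [->|ne_in] := eqVneq (i : nat) n.
  by rewrite subnn !(@fpow_eq0 _ k.+1 0) ?mulr0.
rewrite eq_ab; last by rewrite ltn_neqAle ne_in.
by congr (_ * _); apply: eq_fpow_coef => j le_j; apply: eq_ab; lia.
Qed.

Lemma fcomp_causal f a b n : a 0%N = 0 -> b 0%N = 0 ->
  (forall i, (i < n)%N -> a i = b i) ->
  fcomp f a n - f 1%N * a n = fcomp f b n - f 1%N * b n.
Proof.
move=> a0 b0 eq_ab; case: n eq_ab => [|n] eq_ab; first by rewrite !fcomp_coef0 a0 b0.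
rewrite /fcomp !big_ord_recl /= !fmulr1 -[bump 0 0]/1%N.
set Sa := \sum_(k < n) _; set Sb := \sum_(k < n) _.
have -> : Sa = Sb.
  by apply: eq_bigr => k _; congr (_ * _); exact: fpow_causal.
by ring.
Qed.

Lemma fcomp_rinv f : f 0%N = 0 -> f 1%N != 0 ->
  exists h, h 0%N = 0 /\ fcomp f h = fX K.
Proof.
move=> f0 f1_neq0.
(* [z] kills the constant term, so that [fcomp_causal] applies to any input. *)
pose z a : fps K := fun i => if i is 0 then 0 else a i.
pose F a n := (fX K n - (fcomp f (z a) n - f 1%N * z a n)) / f 1%N.
have [h hF] : exists h, F h = h.
  apply: causal_fixpoint => a b n eq_ab; rewrite /F (@fcomp_causal f (z a) (z b)) //.
  by case=> // i /eq_ab.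
have h0 : h 0%N = 0 by rewrite -hF /F fcomp_coef0 f0 mulr0 subr0 subrr mul0r.
have zh : z h = h by apply: functional_extensionality => -[].
exists h; split => //; apply: functional_extensionality => n.
have := congr1 (fun a => a n * f 1%N) hF; rewrite /F zh divfK //= => e.
apply/eqP; rewrite eq_sym -subr_eq0 -(subrr (h n * f 1%N)) -{1}e.
by apply/eqP; ring.
Qed.

Lemma fcomp_eqX_coef1 f h : h 0%N = 0 -> fcomp f h = fX K -> f 1%N * h 1%N = 1.
Proof.
move=> h0 fhX; have [<- _ _] := fcomp_coef123 f h0.
by rewrite fhX.
Qed.

(* A right inverse [h] of [f] has a right inverse [f'] of its own, and
   [f = f \o (h \o f') = (f \o h) \o f' = f'] makes it two-sided. *)
Lemma fcomp_inv f : f 0%N = 0 -> f 1%N != 0 ->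
  exists h, [/\ h 0%N = 0, fcomp f h = fX K & fcomp h f = fX K].
Proof.
move=> f0 f1_neq0; have [h [h0 fhX]] := fcomp_rinv f0 f1_neq0.
have h1_neq0 : h 1%N != 0.
  by apply: contra_eq_neq (fcomp_eqX_coef1 h0 fhX) => ->; rewrite mulr0 eq_sym oner_neq0.
have [f' [f'0 hf'X]] := fcomp_rinv h0 h1_neq0.
have ff' : f = f' by rewrite -(fcompXr f) -hf'X -fcompA // fhX fcompXl.
by exists h; split; rewrite // ff'.
Qed.

Lemma fpow_diag f n : f 0%N = 0 -> fpow f n n = f 1%N ^+ n.
Proof.
move=> f0; elim: n => [//|n IHn].
rewrite exprS /= /fmul big_ord_recl f0 mul0r add0r big_ord_recl /= subn1 /= IHn.
rewrite big1 ?addr0 // => i _; have lt_in := ltn_ord i.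
by rewrite -[bump 0 _]/(i.+2) fpow_eq0 ?mulr0 //; lia.
Qed.

Lemma Aseq_exists f : f 0%N = 0 -> f 1%N != 0 -> exists A, is_Aseq A f.
Proof.
move=> f0 f1_neq0.
pose F A n := (f n.+1 - \sum_(k < n) A k * fpow f k n) / f 1%N ^+ n.
have [A hF] : exists A, F A = A.
  apply: causal_fixpoint => a b n eq_ab; rewrite /F.
  by congr ((_ - _) / _); apply: eq_bigr => i _; rewrite eq_ab.
exists A; apply: functional_extensionality => -[|n]; first by rewrite fmulX_coef0.
rewrite fmulX_coefS /fcomp big_ord_recr /= fpow_diag // -{2}hF /F divfK.
  by rewrite addrC subrK.
by rewrite expf_neq0.
Qed.

Lemma Aseq_coef0123 A f : is_Aseq A f ->
  [/\ f 0%N = 0, f 1%N = A 0%N, f 2%N = A 1%N * A 0%N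
     & f 3%N = A 1%N ^+ 2 * A 0%N + A 2%N * A 0%N ^+ 2].
Proof.
move=> hA; have f0 : f 0%N = 0 by rewrite hA fmulX_coef0.
have fS n : f n.+1 = fcomp A f n by rewrite {1}hA fmulX_coefS.
have [c1 c2 c3] := fcomp_coef123 A f0.
have f1 : f 1%N = A 0%N by rewrite fS fcomp_coef0.
have f2 : f 2%N = A 1%N * A 0%N by rewrite fS c1 f1.
by split; rewrite // fS c2 f1 f2; ring.
Qed.

Lemma riordan_inv M : is_riordan M ->
  exists N, [/\ is_riordan N, rmul M N = rid K & rmul N M = rid K].
Proof.
case: M => g f [/= g0 [f0 f1_neq0]].
have [h [h0 fhX hfX]] := fcomp_inv f0 f1_neq0.
have gh0 : fcomp g h 0%N != 0 by rewrite fcomp_coef0 g0 oner_neq0.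
have [u hu] := fmul_inv gh0.
exists (u, h); split; rewrite /rmul /rid /= ?fhX ?hfX ?hu //.
- split=> /=; last split=> //.
    by have := congr1 (fun a => a 0%N) hu; rewrite fmul_coef0 fcomp_coef0 g0 mulr1.
  by apply: contra_eq_neq (fcomp_eqX_coef1 h0 fhX) => ->; rewrite mulr0 eq_sym oner_neq0.
- have eg : g = fcomp (fcomp g h) f by rewrite fcompA // hfX fcompXr.
  by rewrite fmulC {1}eg -fcompMl // hu fcomp1.
Qed.

Definition R02_series f := [/\ f 0%N = 0, f 1%N = 1 & f 3%N = f 2%N ^+ 2].

Lemma R02E M : R02 M <-> M.1 0%N = 1 /\ R02_series M.2.
Proof.
case: M => g f /=; split.
  move=> [[/= g0 _] [A [/Aseq_coef0123[f0 f1 f2 f3] [A0 A2]]]].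
  by split=> //; split; rewrite ?f3 ?f2 ?f1 ?A0 ?A2 //; ring.
move=> [g0 [f0 f1 f3]].
have [|A /[dup] hA /Aseq_coef0123[_ f1A f2A f3A]] := Aseq_exists f0.
  by rewrite f1 oner_neq0.
have A0 : A 0%N = 1 by rewrite -f1A.
split; first by split; rewrite //= f1 oner_neq0.
exists A; split=> //; split=> //.
by move: f3A; rewrite f3 f2A A0 expr1n !mulr1 -[LHS]addr0 => /addrI <-.
Qed.

Lemma R02_seriesX : R02_series (fX K).
Proof. by split; rewrite /fX //= expr2 mulr0. Qed.

Lemma R02_series_comp f g : R02_series f -> R02_series g -> R02_series (fcomp g f).
Proof.
move=> [f0 f1 f3] [g0 g1 g3]; have [c1 c2 c3] := fcomp_coef123 g f0.
by split; rewrite ?fcomp_coef0 ?c1 ?c2 ?c3 ?f1 ?g1 ?f3 ?g3 //; ring.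
Qed.

Lemma R02_series_inv f h : R02_series f -> h 0%N = 0 -> fcomp f h = fX K -> R02_series h.
Proof.
move=> [f0 f1 f3] h0 fhX; have [c1 c2 c3] := fcomp_coef123 f h0.
have h1 : h 1%N = 1 by rewrite -[LHS]mul1r -f1 -c1 fhX.
have h2 : h 2%N = - f 2%N.
  by move: c2; rewrite fhX f1 h1 /fX /= => e; rewrite -[h 2%N]subr0 e; ring.
split=> //; move: c3; rewrite fhX f1 h1 h2 f3 /fX /= => e.
by rewrite -[h 3%N]subr0 e; ring.
Qed.

End FormalPowerSeries.

Theorem theorem4p1 (K : numFieldType) :
  R02 (@rid K) /\
  (forall M N : riordan K, R02 M -> R02 N -> R02 (rmul M N)) /\
  (forall M : riordan K, R02 M ->
     exists N : riordan K, is_riordan N /\ rmul M N = rid K /\ rmul N M = rid K /\ R02 N).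
Proof.
split; first by apply/R02E; split; last exact: R02_seriesX.
split.
  move=> [g1 f1] [g2 f2] /R02E[/= g10 f1R] /R02E[/= g20 f2R]; apply/R02E; split=> /=.
    by rewrite fmul_coef0 fcomp_coef0 g10 g20 mulr1.
  exact: R02_series_comp.
move=> M /[dup] /R02E[_ fR] [M_riordan _].
have [N [N_riordan MN NM]] := riordan_inv M_riordan.
exists N; do 3!split=> //; apply/R02E; split; first by case: N_riordan.
case: N_riordan => _ [h0 _]; apply: R02_series_inv fR h0 _.
by move: NM; rewrite /rmul /rid => -[].
Qed.
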